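(* Let $n\ge 2$ and let $\alpha,\beta,x$ be independent random variables, each uniformly distributed on $\{0,\dots,2^n-1\}$. Let $c_i$ be the carry bit entering position $i$ of $\alpha+x$ (so $c_0=0$, $c_{i+1}=\mathrm{maj}(x_i,\alpha_i,c_i)$), and let $\tilde y=((\alpha\dotplus x)\oplus(\beta\dotplus x))\oplus\alpha\oplus\beta=\sum_{i=0}^{n-1}\tilde y_i2^i$. Then for every $i=0,\dots,n-1$, $$\Pr(c_i=1)=\frac{2^i-1}{2^{i+1}},\qquad \Pr(\tilde y_i=0)=\frac23+\frac{1}{3\cdot 4^i}.$$
   Context: $a\dotplus b=(a+b)\bmod 2^n$; $\oplus$ is bitwise XOR; $\mathrm{maj}(p,q,r)=(pq)\oplus(pr)\oplus(qr)$; $x_i,\alpha_i$ denote the $i$-th binary digits (bit $0$ least significant). *)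

From Stdlib Require Import PeanoNat.
From HB Require Import structures.
From mathcomp Require Import all_boot all_order all_algebra.
Set Implicit Arguments. Unset Strict Implicit. Unset Printing Implicit Defensive.
Import Order.TTheory GRing.Theory Num.Theory.

Definition bitn (i x : nat) : bool := Nat.testbit x i.

Definition xorn (a b : nat) : nat := Nat.lxor a b.

Definition addm (n a b : nat) : nat := (a + b) %% 2 ^ n.

Definition maj (p q r : bool) : bool := [&& p & q] (+) [&& p & r] (+) [&& q & r].

Fixpoint carry (alpha x : nat) (i : nat) : bool :=
  match i with
  | 0 => false
  | j.+1 => maj (bitn j x) (bitn j alpha) (carry alpha x j)
  end.

Definition ytilde (n alpha beta x : nat) : nat :=
  xorn (xorn (xorn (addm n alpha x) (addm n beta x)) alpha) beta.

Definition prob3 (n : nat) (E : 'I_(2 ^ n) -> 'I_(2 ^ n) -> 'I_(2 ^ n) -> bool) : rat :=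
  (#|[set t : 'I_(2 ^ n) * 'I_(2 ^ n) * 'I_(2 ^ n) | E t.1.1 t.1.2 t.2]|)%:R
  / ((2 ^ n) ^ 3)%:R.

Arguments prob3 : clear implicits.

From Stdlib Require Import PeanoNat.
From HB Require Import structures.
From mathcomp Require Import all_boot all_order all_algebra zify ring.
Set Implicit Arguments. Unset Strict Implicit. Unset Printing Implicit Defensive.
Import Order.TTheory GRing.Theory Num.Theory.

(* Write c_i(a, x) for the carry entering bit i of a + x.
   1. Bits and carries.  The carry is the overflow of the low parts,
      c_i(a, x) = [2^i <= a mod 2^i + x mod 2^i], hence bit i of a + x is
      a_i xor x_i xor c_i(a, x).  Since bit i (i < n) is unaffected by the
      reduction mod 2^n, bit i of ytilde is c_i(a, x) xor c_i(b, x); so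
      "ytilde_i = 0" means "c_i(a, x) = c_i(b, x)".
   2. Counting.  Probabilities are counts over the box [0, 2^n)^3.  Both
      events depend only on the pair (c_i(a, x), c_i(b, x)), which depends
      only on the low i bits; so a count over n bits is 8^(n-i) times the
      weighted count carry_sum i g over i bits.  Adding a top bit maps the
      pair of carries (p, q) through the majority law (carry_step), and two
      families of weights are closed under this step: the "agreement"
      weights and the "carry of a" weights.  Induction on i gives closed
      forms for both, and the theorem follows by cross-multiplication. *)

Lemma Nat_powE m j : Nat.pow m j = m ^ j.
Proof. by elim: j => //= j ->; rewrite expnS. Qed.

Lemma Nat_divmodE a b : 0 < b -> Nat.div a b = a %/ b /\ Nat.modulo a b = a %% b.
Proof.
move=> hb; have [hr ha] : a %% b < b /\ a = a %/ b * b + a %% b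
  by rewrite ltn_mod -divn_eq.
by split; apply: esym;
  [apply: (Nat.div_unique _ _ _ (a %% b)) | apply: (Nat.mod_unique _ _ (a %/ b))]; lia.
Qed.

Lemma bitnE j a : bitn j a = odd (a %/ 2 ^ j).
Proof.
have hp : 0 < 2 ^ j by rewrite expn_gt0.
have := Nat.testbit_spec' a j; rewrite -/(bitn j a) Nat_powE.
rewrite (proj1 (Nat_divmodE a hp)) (proj2 (Nat_divmodE _ (isT : 0 < 2))) modn2.
by case: bitn; case: odd.
Qed.

Lemma bitn_mod i n y : i < n -> bitn i (y %% 2 ^ n) = bitn i y.
Proof.
move=> lt_in; rewrite !bitnE {2}(divn_eq y (2 ^ n)) -(subnK (ltnW lt_in)) expnD.
rewrite mulnA divnMDl ?expn_gt0 // oddD oddM oddX subn_eq0 leqNgt lt_in.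
by rewrite andbF.
Qed.

Lemma bitn_shift_low m j a (u : bool) : a < 2 ^ m -> j < m ->
  bitn j (a + u * 2 ^ m) = bitn j a.
Proof.
by move=> lt_a lt_jm; rewrite -(bitn_mod _ lt_jm) addnC modnMDl modn_small.
Qed.

Lemma bitn_shift_top m a (u : bool) : a < 2 ^ m -> bitn m (a + u * 2 ^ m) = u.
Proof.
by move=> lt_a; rewrite bitnE addnC divnMDl ?expn_gt0 // divn_small //; case: u.
Qed.

Lemma modn_pow2S i a : a %% 2 ^ i.+1 = a %% 2 ^ i + bitn i a * 2 ^ i.
Proof.
rewrite bitnE {1}(divn_eq a (2 ^ i)) {1}(divn_eq (a %/ 2 ^ i) 2) modn2 expnS.
have lt_r : a %% 2 ^ i < 2 ^ i by rewrite ltn_mod expn_gt0.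
rewrite mulnDl -mulnA [2 * _]mulnC -addnA modnMDl modn_small; first by rewrite addnC.
by case: odd; lia.
Qed.

Lemma divn_lt_double m d : m < 2 * d -> m %/ d = (d <= m).
Proof.
case: (leqP d m) => [le_dm lt_m2d | lt_md _]; last by rewrite divn_small.
rewrite -(subnK le_dm) -{2}[d]mul1n divnDMl ?divn_small //; lia.
Qed.

Lemma carryE i a x : carry a x i = (2 ^ i <= a %% 2 ^ i + x %% 2 ^ i).
Proof.
elim: i => [|i IH] /=; first by rewrite expn0 !modn1.
have lt_a : a %% 2 ^ i < 2 ^ i by rewrite ltn_mod expn_gt0.
have lt_x : x %% 2 ^ i < 2 ^ i by rewrite ltn_mod expn_gt0.
rewrite !modn_pow2S IH expnS /maj.
by case: (bitn i a); case: (bitn i x); apply/idP/idP; lia.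
Qed.

Lemma bitn_add i a x : bitn i (a + x) = bitn i a (+) bitn i x (+) carry a x i.
Proof.
have lt_sum : a %% 2 ^ i + x %% 2 ^ i < 2 * 2 ^ i.
  have := ltn_mod a (2 ^ i); have := ltn_mod x (2 ^ i); rewrite expn_gt0 /=; lia.
rewrite !bitnE carryE {1}(divn_eq a (2 ^ i)) {1}(divn_eq x (2 ^ i)).
rewrite addnACA -mulnDl divnMDl ?expn_gt0 // (divn_lt_double lt_sum) !oddD.
by case: (_ <= _).
Qed.

Lemma carry_shift m i a x (ua ux : bool) : a < 2 ^ m -> x < 2 ^ m -> i <= m ->
  carry (a + ua * 2 ^ m) (x + ux * 2 ^ m) i = carry a x i.
Proof.
move=> lt_a lt_x; elim: i => [|i IH] le_im //=.
by rewrite !bitn_shift_low // IH // ltnW.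
Qed.

Lemma carry_shift_top m a x (ua ux : bool) : a < 2 ^ m -> x < 2 ^ m ->
  carry (a + ua * 2 ^ m) (x + ux * 2 ^ m) m.+1 = maj ux ua (carry a x m).
Proof. by move=> lt_a lt_x /=; rewrite !bitn_shift_top // carry_shift. Qed.

(* Bit i of ytilde vanishes iff alpha + x and beta + x receive the same carry
   at position i: all the other contributions cancel in the xor. *)
Lemma ytilde_bit n i a b x : i < n ->
  ~~ bitn i (ytilde n a b x) = (carry a x i == carry b x i).
Proof.
move=> lt_in; rewrite /ytilde /xorn /bitn !Nat.lxor_spec -!/(bitn _ _) /addm.
rewrite !bitn_mod // !bitn_add.
by case: (bitn i a); case: (bitn i b); case: (bitn i x);
  case: (carry a x i); case: (carry b x i).
Qed.

Definition box_sum m (G : nat -> nat -> nat -> nat) : nat :=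
  \sum_(0 <= a < 2 ^ m) \sum_(0 <= b < 2 ^ m) \sum_(0 <= x < 2 ^ m) G a b x.

Lemma card_box n (E : nat -> nat -> nat -> bool) :
  #|[set t : 'I_(2 ^ n) * 'I_(2 ^ n) * 'I_(2 ^ n) | E t.1.1 t.1.2 t.2]| = box_sum n E.
Proof.
rewrite /box_sum big_mkord; under eq_bigr do rewrite big_mkord.
under eq_bigr do under eq_bigr do rewrite big_mkord.
rewrite pair_bigA pair_bigA /= -sum1_card big_mkcond /=.
by apply: eq_bigr => -[[a b] x] _; rewrite inE /=; case: E.
Qed.

Lemma box_sum_ext m G1 G2 :
  (forall a b x, a < 2 ^ m -> b < 2 ^ m -> x < 2 ^ m -> G1 a b x = G2 a b x) ->
  box_sum m G1 = box_sum m G2.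
Proof.
move=> eqG; do 3![apply: eq_big_nat => ? /andP[_ ?]]; exact: eqG.
Qed.

Lemma sum_pow2S m (F : nat -> nat) :
  \sum_(0 <= a < 2 ^ m.+1) F a = \sum_(u : bool) \sum_(0 <= a < 2 ^ m) F (a + u * 2 ^ m).
Proof.
rewrite big_bool /= expnS mul2n -addnn (big_cat_nat _ (leq_addr _ _)) //= addnC.
congr (_ + _); last by apply: eq_bigr => a _; rewrite addn0.
by rewrite -{1}[2 ^ m]add0n big_addn addnK; apply: eq_bigr => a _; rewrite mul1n.
Qed.

Lemma box_sum_bool m (H : bool -> nat -> nat -> nat -> nat) :
  box_sum m (fun a b x => \sum_(u : bool) H u a b x) = \sum_(u : bool) box_sum m (H u).
Proof.
rewrite /box_sum.
under eq_bigr do under eq_bigr do rewrite exchange_big.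
under eq_bigr do rewrite exchange_big.
by rewrite exchange_big.
Qed.

Lemma box_sum_S m G :
  box_sum m.+1 G = \sum_(ua : bool) \sum_(ub : bool) \sum_(ux : bool)
     box_sum m (fun a b x => G (a + ua * 2 ^ m) (b + ub * 2 ^ m) (x + ux * 2 ^ m)).
Proof.
rewrite /box_sum sum_pow2S.
under eq_bigr do under eq_bigr do under eq_bigr do rewrite sum_pow2S.
under eq_bigr do under eq_bigr do rewrite sum_pow2S.
under eq_bigr do under eq_bigr do under eq_bigr do rewrite exchange_big.
under eq_bigr do rewrite exchange_big.
by under eq_bigr do under eq_bigr do rewrite exchange_big.
Qed.

Definition carry_sum m (g : bool -> bool -> nat) : nat :=
  box_sum m (fun a b x => g (carry a x m) (carry b x m)).

(* How a weight on the carries at position m+1 pulls back to position m: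
   the top bits alpha_m, beta_m, x_m range over all eight values. *)
Definition carry_step (g : bool -> bool -> nat) (p q : bool) : nat :=
  \sum_(ua : bool) \sum_(ub : bool) \sum_(ux : bool) g (maj ux ua p) (maj ux ub q).

(* With no bits, both carries are 0 and the box is a single point. *)
Lemma carry_sum0 g : carry_sum 0 g = g false false.
Proof. by rewrite /carry_sum /box_sum expn0 !big_nat1. Qed.

Lemma carry_sum_S m g : carry_sum m.+1 g = carry_sum m (carry_step g).
Proof.
rewrite /carry_sum /carry_step box_sum_S.
do 3!(rewrite [RHS]box_sum_bool; apply: eq_bigr => ? _).
by apply: box_sum_ext => a b x lt_a lt_b lt_x; rewrite !carry_shift_top.
Qed.

Lemma carry_sum_ext m g h : g =2 h -> carry_sum m g = carry_sum m h.
Proof. by move=> eq_gh; apply: box_sum_ext => a b x _ _ _; apply: eq_gh. Qed.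

Lemma box_sum_carry i k g :
  box_sum (i + k) (fun a b x => g (carry a x i) (carry b x i)) = 8 ^ k * carry_sum i g.
Proof.
elim: k => [|k IH]; first by rewrite addn0 mul1n.
have shift_invariant (ua ub ux : bool) :
    box_sum (i + k) (fun a b x =>
      g (carry (a + ua * 2 ^ (i + k)) (x + ux * 2 ^ (i + k)) i)
        (carry (b + ub * 2 ^ (i + k)) (x + ux * 2 ^ (i + k)) i))
    = 8 ^ k * carry_sum i g.
  rewrite -IH; apply: box_sum_ext => a b x lt_a lt_b lt_x.
  by rewrite !carry_shift // leq_addr.
rewrite addnS box_sum_S.
under eq_bigr do under eq_bigr do under eq_bigr do rewrite shift_invariant.
by rewrite !big_bool /= expnS -mulnA; lia.
Qed.

(* Weight al when the two carries agree, be when they differ; the family is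
   stable under carry_step. *)
Definition agree_weight (al be : nat) (p q : bool) : nat := if p == q then al else be.

Lemma carry_sum_agree m al be :
  3 * carry_sum m (agree_weight al be) + be * 2 ^ m
  = al * (2 * (2 ^ m) ^ 3 + 2 ^ m) + be * (2 ^ m) ^ 3.
Proof.
elim: m al be => [|m IH] al be; first by rewrite carry_sum0 /agree_weight /= expn0 exp1n; lia.
have step : carry_step (agree_weight al be) =2 agree_weight (6 * al + 2 * be) (4 * al + 4 * be).
  by move=> p q; rewrite /carry_step !big_bool /agree_weight; case: p; case: q => /=; lia.
rewrite carry_sum_S (carry_sum_ext _ step).
move: (IH (6 * al + 2 * be) (4 * al + 4 * be)); rewrite !(expnS 2 m).
move: (carry_sum _ _) (2 ^ m) => w s; rewrite !expnMn; nia.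
Qed.

(* Weight al on a carry of alpha + x, plus a constant be; stable under carry_step. *)
Definition carry_weight (al be : nat) (p q : bool) : nat := al * p + be.

Lemma carry_sum_carry m al be :
  2 * carry_sum m (carry_weight al be) + al * (2 ^ m) ^ 2
  = al * (2 ^ m) ^ 3 + 2 * be * (2 ^ m) ^ 3.
Proof.
elim: m al be => [|m IH] al be; first by rewrite carry_sum0 /carry_weight /= expn0 exp1n; lia.
have step : carry_step (carry_weight al be) =2 carry_weight (4 * al) (2 * al + 8 * be).
  by move=> p q; rewrite /carry_step !big_bool /carry_weight; case: p; case: q => /=; lia.
rewrite carry_sum_S (carry_sum_ext _ step).
move: (IH (4 * al) (2 * al + 8 * be)); rewrite !(expnS 2 m).
move: (carry_sum _ _) (2 ^ m) => w s; rewrite !expnMn; nia.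
Qed.

Lemma cube_pow2_split n i : i <= n -> (2 ^ n) ^ 3 = 8 ^ (n - i) * (2 ^ i) ^ 3.
Proof.
move=> le_in; rewrite -{1}(subnKC le_in) expnD expnMn mulnC.
by congr (_ * _); rewrite -expnM mulnC expnM.
Qed.

(* Counting form of Pr(c_i = 1) = (2^i - 1) / 2^(i+1). *)
Lemma carry_count n i : i <= n ->
  2 ^ i.+1 * box_sum n (fun a b x => carry a x i) = (2 ^ i - 1) * (2 ^ n) ^ 3.
Proof.
move=> le_in.
have -> : box_sum n (fun a b x => carry a x i) = 8 ^ (n - i) * carry_sum i (carry_weight 1 0).
  rewrite -box_sum_carry subnKC //.
  by apply: box_sum_ext => a b x _ _ _; rewrite /carry_weight mul1n addn0.
have := carry_sum_carry i 1 0; rewrite (cube_pow2_split le_in) (expnS 2 i).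
move: (carry_sum _ _) (2 ^ i) (8 ^ (n - i)) => w s t; rewrite !expnS expn0 !muln1 => h.
have {}h : 2 * w = s * s * (s - 1) by nia.
transitivity (t * s * (2 * w)); [ring | rewrite h; ring].
Qed.

(* Counting form of Pr(ytilde_i = 0) = (2 * 4^i + 1) / (3 * 4^i). *)
Lemma agree_count n i : i < n ->
  3 * 4 ^ i * box_sum n (fun a b x => ~~ bitn i (ytilde n a b x))
  = (2 * 4 ^ i + 1) * (2 ^ n) ^ 3.
Proof.
move=> lt_in.
have -> : box_sum n (fun a b x => ~~ bitn i (ytilde n a b x))
    = 8 ^ (n - i) * carry_sum i (agree_weight 1 0).
  rewrite -box_sum_carry subnKC 1?ltnW //.
  by apply: box_sum_ext => a b x _ _ _; rewrite ytilde_bit // /agree_weight; case: (_ == _).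
have pow4 : 4 ^ i = (2 ^ i) ^ 2 by rewrite -expnM mulnC expnM.
have := carry_sum_agree i 1 0; rewrite (cube_pow2_split (ltnW lt_in)) pow4.
move: (carry_sum _ _) (2 ^ i) (8 ^ (n - i)) => w s t; rewrite !expnS expn0 !muln1 => h.
have {}h : 3 * w = s * (2 * (s * s) + 1) by lia.
transitivity (s * s * t * (3 * w)); [ring | rewrite h; ring].
Qed.

Local Open Scope ring_scope.

Lemma ratio_cross (x y z w : nat) : (0 < y)%N -> (0 < w)%N -> (x * w = z * y)%N ->
  (x%:R / y%:R : rat) = z%:R / w%:R.
Proof.
move=> y_gt0 w_gt0 e; apply/eqP; rewrite eqr_div ?pnatr_eq0 -?lt0n //.
by rewrite -!natrM e.
Qed.

Theorem mainTheorem6 (n : nat) (hn : (2 <= n)%N) (i : nat) (hi : (i < n)%N) :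
  prob3 n (fun alpha beta x => carry alpha x i) = (2 ^ i - 1)%N%:R / (2 ^ i.+1)%N%:R
  /\
  prob3 n (fun alpha beta x => ~~ bitn i (ytilde n alpha beta x))
    = 2%:R / 3%:R + 1 / (3 * 4 ^ i)%N%:R.
Proof.
split.
  rewrite /prob3 (card_box n (fun a b x => carry a x i)).
  apply: ratio_cross; rewrite ?expn_gt0 //.
  by rewrite mulnC carry_count // ltnW.
have -> : 2%:R / 3%:R + 1 / (3 * 4 ^ i)%N%:R = (2 * 4 ^ i + 1)%N%:R / (3 * 4 ^ i)%N%:R :> rat.
  by rewrite !natrM natrD natrM; field; rewrite pnatr_eq0 -lt0n expn_gt0.
rewrite /prob3 (card_box n (fun a b x => ~~ bitn i (ytilde n a b x))).
apply: ratio_cross; rewrite ?muln_gt0 ?expn_gt0 //.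
by rewrite mulnC agree_count.
Qed.
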